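(* Let $G$ be a compact Abelian group with a continuous length function $l$, and let $(H_n)_{n\in\mathbb{N}}$ be closed subgroups of $G$ converging to $G$ for the Hausdorff distance of $d_l(g,g')=l(g^{-1}g')$. For each $n$ let $J_n\subseteq\widehat G$ be the annihilator of $H_n$. Let $F$ be a finite subset of $\widehat G\setminus\{1\}$. Then there exists $N\in\mathbb{N}$ such that $J_n\cap F=\varnothing$ for all $n\ge N$.
   Context: A length function: $l\ge0$, $l(g)=0$ iff $g$ is the unit, symmetric, subadditive. $1$ denotes the trivial character. *)

From HB Require Import structures.
From mathcomp Require Import all_boot all_order all_algebra.
From mathcomp Require Import complex.
From mathcomp Require Import all_classical all_reals all_analysis.
Import numFieldNormedType.Exports.

Set Implicit Arguments.
Unset Strict Implicit.
Unset Printing Implicit Defensive.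
Import Order.TTheory GRing.Theory Num.Theory.

Local Open Scope classical_set_scope.
Local Open Scope ring_scope.

HB.instance Definition _ (R : rcfType) := PseudoPointedMetric.copy R[i] (R[i])^o.

Section Defs.
Variable R : realType.

Definition length_function (G : zmodType) (l : G -> R) : Prop :=
  [/\ (forall g, 0 <= l g),
      (forall g, l g = 0 <-> g = 0),
      (forall g, l (- g) = l g) &
      (forall g h, l (g + h) <= l g + l h)].

(* d_l(g, g') = l(g^{-1} g'), additively l(-g + g'). *)
Definition dl (G : zmodType) (l : G -> R) (g g' : G) : R := l (- g + g').

Definition hausdorff_dist (T : Type) (d : T -> T -> R) (A B : set T) : \bar R :=
  maxe (ereal_sup [set ereal_inf [set (d a b)%:E | b in B] | a in A])
       (ereal_sup [set ereal_inf [set (d a b)%:E | a in A] | b in B]).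

Definition closed_subgroup (G : topologicalZmodType) (H : set G) : Prop :=
  [/\ closed H, H 0 & (forall x y, H x -> H y -> H (x - y))].

Definition is_character (G : topologicalZmodType) (chi : G -> R[i]) : Prop :=
  [/\ (forall x y, chi (x + y) = chi x * chi y),
      (forall x, `|chi x| = 1) &
      continuous chi].

Definition dual (G : topologicalZmodType) : set (G -> R[i]) :=
  [set chi | is_character chi].

Definition trivial_char (G : topologicalZmodType) : G -> R[i] := fun _ => 1.

Definition annihilator (G : topologicalZmodType) (H : set G) : set (G -> R[i]) :=
  [set chi | @dual G chi /\ (forall h, H h -> chi h = 1)].

End Defs.
Arguments dual {R} G.
Arguments trivial_char {R} G.

From HB Require Import structures.
From mathcomp Require Import all_boot all_order all_algebra.
From mathcomp Require Import complex.
From mathcomp Require Import all_classical all_reals all_analysis.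
Import numFieldNormedType.Exports.

Set Implicit Arguments.
Unset Strict Implicit.
Unset Printing Implicit Defensive.
Import Order.TTheory GRing.Theory Num.Theory.
Local Open Scope classical_set_scope.
Local Open Scope ring_scope.

(** For a nontrivial character [chi] pick [g] with [chi g != 1]; by continuity
    [chi x != chi g] on a neighbourhood [U] of [0].  On the compact set
    [~` U] the continuous length [l] stays away from [0], so [l x < d] forces
    [x \in U] for some [d > 0].  Once the Hausdorff distance from [H n] to [G]
    is below [d], some [a \in H n] has [l (- a + g) < d]; if [chi] annihilated
    [H n] we would get [chi (- a + g) = chi g].  For finite [F] take the
    largest of the finitely many thresholds. *)

Lemma near_forall_finite (I T : Type) (F : set_system T) (A : set I)
    (P : I -> T -> Prop) :
  Filter F -> finite_set A -> (forall i, A i -> \forall x \near F, P i x) ->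
  \forall x \near F, forall i, A i -> P i x.
Proof.
elim/Pchoice: I => I in A P *.
move=> FF /finite_fsetP[X ->] PX.
apply: filterS (filter_bigI (f := P) FF _); first by move=> x XP i /XP.
by move=> i /PX.
Qed.

Lemma compact_sublevel_subset_nbhs (R : realType) (T : topologicalType)
    (f : T -> R) (x0 : T) (U : set T) :
  compact [set: T] -> continuous f -> (forall x, f x = 0 -> x = x0) ->
  nbhs x0 U -> exists2 d : R, 0 < d & forall x, `|f x| < d -> U x.
Proof.
move=> cT cf f0 Ux0.
pose K := ~` U°.
have cK : compact K.
  exact: subclosed_compact (open_closedC (@open_interior _ U)) cT _.
have clfK : closed (f @` K).
  apply: compact_closed; first exact: Rhausdorff.
  by apply: continuous_compact => //; exact: continuous_subspaceT.
have nfK0 : ~ (f @` K) 0 by move=> [x Kx /f0 x0E]; apply: Kx; rewrite x0E.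
have /nbhs_ballP[d /= d0 dfK] : nbhs (0 : R) (~` (f @` K)).
  by apply: open_nbhs_nbhs; split => //; exact: closed_openC.
exists d => // x fxd; apply: interior_subset; apply: contrapT => Kx.
by apply: (dfK (f x)); [rewrite /ball /= sub0r normrN | exists x].
Qed.

Lemma hausdorff_dist_lt (R : realType) (T : Type) (d : T -> T -> R)
    (A B : set T) (e : R) (b : T) :
  (hausdorff_dist d A B < e%:E)%E -> B b -> exists2 a, A a & d a b < e.
Proof.
move=> ABe Bb.
have infAb : (ereal_inf [set (d a b)%:E | a in A] < e%:E)%E.
  apply: le_lt_trans ABe; rewrite /hausdorff_dist le_max; apply/orP; right.
  by apply: ereal_sup_ubound; exists b.
by have /ereal_inf_lt[_ [a Aa <-]] := infAb; exists a.
Qed.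

Section Character.
Variables (R : realType) (G : topologicalZmodType) (chi : G -> R[i]).
Hypothesis chi_char : dual G chi.

Lemma char0 : chi 0 = 1.
Proof.
have [chiD chi_norm _] := chi_char.
have chi0_neq0 : chi 0 != 0 by rewrite -normr_eq0 chi_norm oner_eq0.
by apply: (mulfI chi0_neq0); rewrite -chiD addr0 mulr1.
Qed.

Lemma char_addKl (a g : G) : chi a = 1 -> chi (- a + g) = chi g.
Proof.
have [chiD _ _] := chi_char.
by move=> chia1; rewrite -[LHS]mul1r -chia1 -chiD addNKr.
Qed.

Lemma nbhs0_char_neq (g : G) :
  chi g != 1 -> nbhs (0 : G) [set x | chi x != chi g].
Proof.
have [_ _ chi_cont] := chi_char.
move=> chig1; suff: nbhs (chi 0) [set y | y != chi g] by exact: chi_cont.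
rewrite char0; apply: open_nbhs_nbhs; split; last by rewrite /= eq_sym.
have -> : [set y | y != chi g] = ~` [set chi g].
  by apply/seteqP; split => y /=; move/eqP.
apply: closed_openC; apply: accessible_closed_set1.
exact/hausdorff_accessible/(@norm_hausdorff _ R[i]^o).
Qed.

End Character.

Lemma near_not_annihilator (R : realType) (G : topologicalZmodType)
    (l : G -> R) (H : nat -> set G) (chi : G -> R[i]) :
  compact [set: G] -> length_function l -> continuous l ->
  (hausdorff_dist (dl l) (H n) [set: G]) @[n --> \oo] --> 0%E ->
  dual G chi -> chi <> trivial_char G ->
  \forall n \near \oo, ~ annihilator (H n) chi.
Proof.
move=> cG [l_ge0 l_eq0 _ _] l_cont HG chi_char chi_neq1.
have [g chig1] : exists g, chi g != 1.
  apply/not_existsP => chi_eq1; apply: chi_neq1; apply/funext => x.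
  by apply/eqP/negPn/negP/chi_eq1.
have [d d_gt0 small_l] := compact_sublevel_subset_nbhs cG l_cont
  (fun x => (l_eq0 x).1) (nbhs0_char_neq chi_char chig1).
have d_gt0E : (0 < d%:E)%E by rewrite lte_fin.
near=> n => -[_ chiH].
have HGd : (hausdorff_dist (dl l) (H n) [set: G] < d%:E)%E.
  by near: n; exact: HG _ (open_ereal_lt' d_gt0E).
have [a Ha lag] := hausdorff_dist_lt (b := g) HGd I.
have /negP[] : chi (- a + g) != chi g by apply: small_l; rewrite ger0_norm.
by rewrite char_addKl // chiH.
Unshelve. all: by end_near.
Qed.

Theorem mainTheorem9 (R : realType) (G : topologicalZmodType) (l : G -> R)
    (H : nat -> set G) (F : set (G -> R[i])) :
  compact [set: G] ->
  length_function l -> continuous l ->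
  (forall n, closed_subgroup (H n)) ->
  (hausdorff_dist (dl l) (H n) [set: G]) @[n --> \oo] --> 0%E ->
  finite_set F ->
  F `<=` dual G `\` [set trivial_char G] ->
  exists N : nat, forall n : nat, (N <= n)%N -> annihilator (H n) `&` F = set0.
Proof.
move=> cG l_len l_cont _ HG finF F_nontriv.
have [N _ HN] :
    \forall n \near \oo, forall chi, F chi -> ~ annihilator (H n) chi.
  apply: (near_forall_finite (P := fun chi n => ~ annihilator (H n) chi)) => //.
  move=> chi /F_nontriv[chi_char chi_neq1].
  exact: (near_not_annihilator cG l_len l_cont HG chi_char chi_neq1).
exists N => n /HN HNn; apply/seteqP; split=> // chi [chiH Fchi].
exact: HNn _ Fchi chiH.
Qed.
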